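(* Let $\Gamma=\{f_1,\dots,f_n\}$ be a family of weak weight-functions and suppose there is a nonzero direction $\mathbf{r}\in[0,1]^n$ such that each $f_i$ has a directional derivative in direction $\mathbf{r}$ at every point and $\frac{\partial f_i}{\partial\mathbf{r}}(\mathbf{x})\ge 0$ for every $i$ and every $\mathbf{x}\in[0,1]^n$. Then $\mathsf{BGM}_\Gamma$ is an $\mathbf{r}$-increasing pre-aggregation function.
   Context: A family of weak weight-functions (wFWF) is a family $\Gamma=\{f_i:[0,1]^n\to[0,1]\mid 1\le i\le n\}$ such that (I) $\sum_{i=1}^n f_i(\mathbf{x})\le 1$ for all $\mathbf{x}\in[0,1]^n$ and (II) $\sum_{i=1}^n f_i(1,\dots,1)=1$. The bounded generalized mixture function is $\mathsf{BGM}_\Gamma(\mathbf{x})=\sum_{i=1}^n f_i(\mathbf{x})\,x_i$. For a nonzero $\mathbf{r}\in\mathbb{R}^n$, $F:[0,1]^n\to[0,1]$ is $\mathbf{r}$-increasing if $F(\mathbf{x})\le F(x_1+tr_1,\dots,x_n+tr_n)$ for all $\mathbf{x}\in[0,1]^n$ and $t>0$ with $(x_1+tr_1,\dots,x_n+tr_n)\in[0,1]^n$. $F$ is a pre-aggregation function if $F(0,\dots,0)=0$, $F(1,\dots,1)=1$ and $F$ is $\mathbf{r}$-increasing for some nonzero $\mathbf{r}\in[0,1]^n$. *)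

From HB Require Import structures.
From mathcomp Require Import all_boot all_order all_algebra.
From mathcomp Require Import all_classical all_reals all_analysis.
Set Implicit Arguments. Unset Strict Implicit. Unset Printing Implicit Defensive.
Import Order.TTheory GRing.Theory Num.Theory.
Local Open Scope ring_scope.
Import numFieldNormedType.Exports.
Local Open Scope classical_set_scope.

Section Defs.
Variables (R : realType) (n : nat).

Definition in_cube (x : 'I_n -> R) : Prop := forall i, 0 <= x i <= 1.

Definition zero_vec : 'I_n -> R := fun _ => 0.
Definition one_vec : 'I_n -> R := fun _ => 1.

Definition shift (x r : 'I_n -> R) (t : R) : 'I_n -> R := fun i => x i + t * r i.

Definition is_dir_deriv (f : ('I_n -> R) -> R) (x r : 'I_n -> R) (d : R) : Prop :=
  (fun t : R => (f (shift x r t) - f x) / t)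
    @ within [set t : R | in_cube (shift x r t)] (0 : R)^' --> d.

Definition wFWF (f : 'I_n -> ('I_n -> R) -> R) : Prop :=
  [/\ (forall i x, in_cube x -> 0 <= f i x <= 1),
      (forall x, in_cube x -> \sum_(i < n) f i x <= 1) &
      \sum_(i < n) f i one_vec = 1].

Definition BGM (f : 'I_n -> ('I_n -> R) -> R) (x : 'I_n -> R) : R :=
  \sum_(i < n) f i x * x i.

Definition r_increasing (F : ('I_n -> R) -> R) (r : 'I_n -> R) : Prop :=
  forall x t, in_cube x -> 0 < t -> in_cube (shift x r t) -> F x <= F (shift x r t).

Definition nonzero_vec (r : 'I_n -> R) : Prop := exists i, r i != 0.

Definition pre_aggregation (F : ('I_n -> R) -> R) : Prop :=
  [/\ (forall x, in_cube x -> 0 <= F x <= 1),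
      F zero_vec = 0, F one_vec = 1 &
      exists r, [/\ nonzero_vec r, in_cube r & r_increasing F r]].

End Defs.

From Pilot Require Import Defs.
From HB Require Import structures.
From mathcomp Require Import all_boot all_order all_algebra.
From mathcomp Require Import all_classical all_reals all_analysis.
From mathcomp Require Import lra.
Set Implicit Arguments. Unset Strict Implicit. Unset Printing Implicit Defensive.
Import Order.TTheory GRing.Theory Num.Theory.
Import numFieldNormedType.Exports.
Local Open Scope ring_scope.
Local Open Scope classical_set_scope.

(* Along a segment u |-> x + u r inside the cube, each weight f_i becomes a
   real function whose difference quotients, taken within the segment,
   converge to a nonnegative limit.  At interior points this is an ordinary
   nonnegative derivative, and at the endpoints it still forces continuity,
   so the mean value theorem makes f_i nondecreasing along r.  Since x_i and
   r_i are nonnegative, every summand f_i(x) x_i of the mixture then grows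
   along r; the bounds 0 <= BGM <= 1 come from the weights summing to at
   most 1. *)

Lemma near_within_cvg {T : Type} (F : set_system T) (D : set T) :
  Filter F -> (\forall x \near F, D x) -> F --> within D F.
Proof. by move=> FF FD P; apply: filterS2 FD => x Dx /(_ Dx). Qed.

Section DifferenceQuotient.
Variables (R : realType) (g : R -> R).

Lemma dq_cvg_continuous_within (D : set R) (s d : R) :
  (fun h => (g (s + h) - g s) / h) @ within [set h | D (s + h)] (0 : R)^' --> d ->
  g @ within D (nbhs s) --> g s.
Proof.
move=> dq; have id0 : (fun h : R => h) @ within [set h | D (s + h)] (0 : R)^' --> 0.
  exact: cvg_trans (cvg_within _) (cvg_within _).
have : (fun h => h * ((g (s + h) - g s) / h))
    @ within [set h | D (s + h)] (0 : R)^' --> 0 * d by exact: cvgM.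
rewrite mul0r => /cvgrPdist_lt dq0.
apply/cvgrPdist_lt => e e0; have near0 := dq0 e e0.
rewrite near_withinE; apply/(nbhs0P (fun u => D u -> `|g s - g u| < e)).
move: near0; rewrite !near_withinE; apply: filterS => h /= near_h Dh.
have [->|h0] := eqVneq h 0; first by rewrite addr0 subrr normr0.
by move: (near_h h0 Dh); rewrite mulrCA divff // mulr1 sub0r opprB.
Qed.

Lemma dq_cvg_is_derive (s d : R) :
  (fun h => (g (s + h) - g s) / h) @ (0 : R)^' --> d -> is_derive s 1 g d.
Proof.
have -> : (fun h => (g (s + h) - g s) / h) =
    (fun h => h^-1 *: ((g \o shift s) (h *: 1) - g s)).
  by apply/funext => h; rewrite /= /GRing.scale /= mulr1 [h + s]addrC mulrC.
by move=> dq; split; [apply/cvg_ex; exists d | exact: cvg_lim].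
Qed.

End DifferenceQuotient.

Section NondecreasingOnSegment.
Variables (R : realType) (g : R -> R) (a b : R).
Hypothesis g_dq_ge0 : forall s, a <= s <= b -> exists2 d,
  (fun h => (g (s + h) - g s) / h) @ within [set h | a <= s + h <= b] (0 : R)^' --> d
  & 0 <= d.

Lemma within_dq_ge0_continuous : {within `[a, b], continuous g}.
Proof.
apply/subspace_continuousP => s; rewrite /= in_itv /= => sab.
by have [d dq _] := g_dq_ge0 sab; apply: dq_cvg_continuous_within dq.
Qed.

Lemma within_dq_ge0_is_derive s : s \in `]a, b[%R ->
  exists2 d, is_derive s 1 g d & 0 <= d.
Proof.
move=> sab; have [d dq d0] := g_dq_ge0 (subset_itv_oo_cc sab).
have near_ab : \forall h \near (0 : R), a <= s + h <= b.
  apply: (proj1 (nbhs0P (fun u => a <= u <= b) s)).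
  by apply: filterS (near_in_itvoo sab) => u; rewrite in_itv /= => /andP[/ltW -> /ltW ->].
exists d => //; apply: dq_cvg_is_derive; apply: cvg_trans dq.
apply: cvg_app; apply: near_within_cvg; exact: cvg_within near_ab.
Qed.

Lemma within_dq_ge0_ndecr x y : a <= x -> x <= y -> y <= b -> g x <= g y.
Proof.
apply: (ger0_derive1_ndecr _ _ within_dq_ge0_continuous).
- by move=> s /within_dq_ge0_is_derive [d gd _]; exact: ex_derive.
- by move=> s /within_dq_ge0_is_derive [d gd d0]; rewrite derive1E derive_val.
Qed.

End NondecreasingOnSegment.

Section Cube.
Variables (R : realType) (n : nat).
Implicit Types (x r : 'I_n -> R) (F : ('I_n -> R) -> R).

Lemma shiftD x r s h : Defs.shift (Defs.shift x r s) r h = Defs.shift x r (s + h).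
Proof. by apply/funext => j; rewrite /Defs.shift mulrDl addrA. Qed.

Lemma shift0 x r : Defs.shift x r 0 = x.
Proof. by apply/funext => j; rewrite /Defs.shift mul0r addr0. Qed.

Lemma in_cube_shift_between x r t u :
  in_cube x -> in_cube (Defs.shift x r t) -> 0 <= u <= t ->
  in_cube (Defs.shift x r u).
Proof.
move=> xc xtc /andP[u0 ut] j; move: (xc j) (xtc j); rewrite /Defs.shift.
move=> /andP[xj0 xj1] /andP[xtj0 xtj1].
have [rj0|rj0] := lerP 0 (r j); apply/andP; split; nra.
Qed.

Lemma is_dir_deriv_along_segment F x r t s d :
  in_cube x -> in_cube (Defs.shift x r t) ->
  is_dir_deriv F (Defs.shift x r s) r d ->
  (fun h => (F (Defs.shift x r (s + h)) - F (Defs.shift x r s)) / h)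
    @ within [set h | 0 <= s + h <= t] (0 : R)^' --> d.
Proof.
move=> xc xtc; rewrite /is_dir_deriv.
under [X in X @ _ --> _ -> _]eq_fun => h do rewrite shiftD.
apply: cvg_trans; apply: cvg_app; apply: within_subset => h /= sh.
by rewrite shiftD; exact: in_cube_shift_between sh.
Qed.

Lemma dir_deriv_ge0_r_increasing F r :
  (forall x, in_cube x -> exists2 d, is_dir_deriv F x r d & 0 <= d) ->
  r_increasing F r.
Proof.
move=> dF x t xc t0 xtc; rewrite -[X in F X <= _](shift0 x r).
apply: (@within_dq_ge0_ndecr R (fun u => F (Defs.shift x r u)) 0 t) => //; last first.
  exact: ltW.
move=> s s0t; have [d dq d0] := dF _ (in_cube_shift_between xc xtc s0t).
by exists d => //; exact: is_dir_deriv_along_segment dq.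
Qed.

End Cube.

Section BoundedGeneralizedMixture.
Variables (R : realType) (n : nat) (f : 'I_n -> ('I_n -> R) -> R).

Lemma BGM_zero_vec : BGM f (@zero_vec R n) = 0.
Proof. by rewrite /BGM big1 // => i _; rewrite /zero_vec mulr0. Qed.

Lemma BGM_one_vec : BGM f (@one_vec R n) = \sum_(i < n) f i (@one_vec R n).
Proof. by apply: eq_bigr => i _; rewrite /one_vec mulr1. Qed.

Lemma BGM_in_unit x : wFWF f -> in_cube x -> 0 <= BGM f x <= 1.
Proof.
move=> [f01 fsum _] xc; have f0 i : 0 <= f i x by case/andP: (f01 i x xc).
apply/andP; split.
  by apply: sumr_ge0 => i _; apply: mulr_ge0 => //; case/andP: (xc i).
apply: le_trans (fsum x xc); apply: ler_sum => i _.
by apply: ler_piMr => //; case/andP: (xc i).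
Qed.

Lemma BGM_r_increasing r :
  (forall i x, in_cube x -> 0 <= f i x) -> (forall i, 0 <= r i) ->
  (forall i, r_increasing (f i) r) -> r_increasing (BGM f) r.
Proof.
move=> f0 r0 f_incr x t xc t0 xtc; apply: ler_sum => i _.
apply: ler_pM; [exact: f0 | by case/andP: (xc i) | exact: f_incr |].
by rewrite /Defs.shift lerDl mulr_ge0 // ltW.
Qed.

End BoundedGeneralizedMixture.

Theorem corollary3 (R : realType) (n : nat)
    (f : 'I_n -> ('I_n -> R) -> R) (r : 'I_n -> R) :
  wFWF f ->
  nonzero_vec r -> in_cube r ->
  (forall i x, in_cube x -> exists2 d, is_dir_deriv (f i) x r d & 0 <= d) ->
  pre_aggregation (BGM f) /\ r_increasing (BGM f) r.
Proof.
move=> wf r_nz r_cube f_dd; have [f01 _ f_one] := wf.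
have BGM_incr : r_increasing (BGM f) r.
  apply: BGM_r_increasing => [i x /(f01 i)/andP[] // | i | i].
    by case/andP: (r_cube i).
  exact: dir_deriv_ge0_r_increasing (f_dd i).
split=> //; split=> [x|||].
- exact: BGM_in_unit wf.
- exact: BGM_zero_vec.
- by rewrite BGM_one_vec.
- by exists r.
Qed.
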